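(* Let $k\ge 2$ and $w=2^k-1$. Consider a line of $3w+2$ cells indexed $0,\dots,3w+1$ in which cells $0,\dots,w-1$ are empty, cells $w,\dots,2w-1$ are blocked, cells $2w,\dots,3w-1$ are empty, the frog is on cell $3w$, and cell $3w+1$ is empty (the line $E^wB^wE^wFE$). Let $\tilde Z$ be the sequence of jump lengths $$3w,\ \underbrace{1,\dots,1}_{w-1},\ w+1,\ \underbrace{1,\dots,1}_{w-1},\ 2.$$ Then the frog can perform $\tilde Z$ validly, and every valid execution of $\tilde Z$ visits every empty cell exactly once and ends with the frog on cell $3w+1$.
   Context: A frog on a line of cells performs a given sequence of positive jump lengths $J_1,J_2,\dots$; for each jump it chooses a direction, moving from position $p$ to $p+J_i$ or $p-J_i$. An execution is valid if every landing cell lies on the line, is not blocked, and has not been visited before (the starting cell counts as visited). *)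

From mathcomp Require Import all_boot.
Set Implicit Arguments. Unset Strict Implicit. Unset Printing Implicit Defensive.

(* An execution of the jump sequence [js] from cell [p] is recorded as the
   sequence [ls] of landing cells (one per jump).  Choosing direction +/- for
   jump j from p means the landing l satisfies l = p + j or p = l + j
   (the latter is p - j, required to be a cell, i.e. >= 0).
   [visited] is the list of cells visited so far (including the start). *)
Fixpoint valid_from (n : nat) (blocked : pred nat) (visited : seq nat)
    (p : nat) (js ls : seq nat) : bool :=
  match js, ls with
  | [::], [::] => true
  | j :: js', l :: ls' =>
      [&& (l == p + j) || (p == l + j), l < n, ~~ blocked l, l \notin visited
        & valid_from n blocked (l :: visited) l js' ls']
  | _, _ => false
  end.

Definition valid_exec (n : nat) (blocked : pred nat) (s : nat) (js ls : seq nat) :=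
  valid_from n blocked [:: s] s js ls.

Definition line_len (w : nat) := 3 * w + 2.
Definition line_blocked (w : nat) : pred nat := fun c => (w <= c) && (c < 2 * w).
Definition line_start (w : nat) := 3 * w.
Definition line_empty (w c : nat) : bool :=
  [&& c < line_len w, ~~ line_blocked w c & c != line_start w].

Definition Ztilde (w : nat) : seq nat :=
  3 * w :: nseq w.-1 1 ++ (w + 1) :: nseq w.-1 1 ++ [:: 2].

From mathcomp Require Import all_boot.
From mathcomp Require Import zify.

Set Implicit Arguments.
Unset Strict Implicit.

(* Every jump of Z~ is forced.  The jump 3w from 3w can only reach 0.  A unit
   jump can never go back, since the cell behind the frog is off the line,
   blocked or already visited; so the first run of w-1 unit jumps sweeps the
   left block up to w-1.  From there w+1 must land on 2w, the second run
   sweeps the right block up to 3w-1 (cell 2w-1 behind it is blocked), and the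
   final jump 2 cannot land on 3w-3, which is blocked or visited, so it lands
   on 3w+1.  The unique execution therefore visits the empty cells in order. *)

Section UnitRuns.

Variables (n : nat) (blocked : pred nat).

Lemma valid_from_unit_run_inv m :
  forall (p : nat) (V : seq nat) (js ls : seq nat),
  p \in V -> (p == 0) || blocked p.-1 || (p.-1 \in V) ->
  valid_from n blocked V p (nseq m 1 ++ js) ls ->
  exists2 ls', ls = iota p.+1 m ++ ls' &
    valid_from n blocked (rev (iota p.+1 m) ++ V) (p + m) js ls'.
Proof.
elim: m => [|m IHm] p V js ls pV back_closed /=.
  by move=> valid_ls; exists ls; rewrite ?addn0.
case: ls => [|l ls] //= /and5P [jump _ free_l new_l valid_ls].
have l_eq : l = p.+1.
  case/orP: jump => /eqP l_eq; first by rewrite l_eq addn1.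
  by move: back_closed; rewrite l_eq addn1 /= (negbTE free_l) (negbTE new_l).
subst l.
have back_visited : (p.+1 == 0) || blocked p.+1.-1 || (p.+1.-1 \in p.+1 :: V).
  by rewrite /= in_cons pV !orbT.
have [ls' -> valid_ls'] := IHm p.+1 _ js ls (mem_head _ _) back_visited valid_ls.
by exists ls'; rewrite // rev_cons cat_rcons -addSnnS.
Qed.

Lemma valid_from_unit_run m :
  forall (p : nat) (V : seq nat) (js ls : seq nat),
  (forall i, 0 < i <= m ->
     [&& p + i < n, ~~ blocked (p + i) & p + i \notin V]) ->
  valid_from n blocked (rev (iota p.+1 m) ++ V) (p + m) js ls ->
  valid_from n blocked V p (nseq m 1 ++ js) (iota p.+1 m ++ ls).
Proof.
elim: m => [|m IHm] p V js ls free /=; first by rewrite addn0.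
move=> valid_ls.
have /and3P [on_line not_blocked new] := free 1 isT.
rewrite addn1 in on_line not_blocked new.
rewrite addn1 eqxx on_line not_blocked new /=.
apply: IHm; last by move: valid_ls; rewrite rev_cons cat_rcons addSnnS.
move=> i /andP [i_gt0 i_le_m].
have /and3P [] : [&& p + i.+1 < n, ~~ blocked (p + i.+1) & p + i.+1 \notin V].
  by apply: free; rewrite /= ltnS i_le_m.
rewrite -addSnnS in_cons => -> -> /negbTE ->.
by rewrite orbF; apply/eqP; lia.
Qed.

End UnitRuns.

Definition Ztilde_route (w : nat) : seq nat :=
  0 :: iota 1 w.-1 ++ 2 * w :: iota (2 * w).+1 w.-1 ++ [:: 3 * w + 1].

Section Ztilde.

Variable w : nat.
Hypothesis w_ge2 : 2 <= w.

Lemma valid_Ztilde_route :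
  valid_exec (line_len w) (line_blocked w) (line_start w) (Ztilde w)
    (Ztilde_route w).
Proof.
rewrite /valid_exec /Ztilde /Ztilde_route /line_start /= add0n eqxx orbT.
rewrite /line_len /line_blocked in_cons orbF.
apply/and5P; split; [lia | lia | lia | lia |].
apply: valid_from_unit_run => [i i_range|].
  rewrite !in_cons orbF; apply/and3P; split; lia.
rewrite /= !(mem_cat, mem_rev, mem_iota, in_cons) orbF.
apply/and5P; split; [lia | lia | lia | lia |].
apply: valid_from_unit_run => [i i_range|].
  rewrite !(mem_cat, mem_rev, mem_iota, in_cons) orbF; apply/and3P; split; lia.
rewrite /= !(mem_cat, mem_rev, mem_iota, in_cons) orbF andbT.
apply/and4P; split; lia.
Qed.

Lemma valid_Ztilde_routeE ls :
  valid_exec (line_len w) (line_blocked w) (line_start w) (Ztilde w) ls ->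
  ls = Ztilde_route w.
Proof.
rewrite /valid_exec /Ztilde /line_start.
case: ls => [|l0 ls] //= /and5P [jump0 on_line0 _ _ valid0].
have l0_eq : l0 = 0 by move: jump0 on_line0; rewrite /line_len => /orP [] /eqP; lia.
subst l0.
have [ls1 -> valid1] := valid_from_unit_run_inv (p := 0) (mem_head _ _) isT valid0.
case: ls1 valid1 => [|l1 ls1] //= /and5P [jump1 on_line1 _ _ valid2].
have l1_eq : l1 = 2 * w.
  by move: jump1 on_line1; rewrite /line_len => /orP [] /eqP; lia.
subst l1.
have back_blocked : line_blocked w (2 * w).-1 by apply/andP; lia.
have [|ls2 -> valid3] := valid_from_unit_run_inv (mem_head _ _) _ valid2.
  by rewrite back_blocked orbT.
case: ls2 valid3 => [|l2 [|? ?]] //=; last by rewrite !andbF.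
case/and5P=> jump2 on_line2 not_blocked2 new2 _.
suff -> : l2 = 3 * w + 1 by [].
move: jump2 on_line2 not_blocked2 new2.
rewrite /line_len /line_blocked !(mem_cat, mem_rev, mem_iota, in_cons) orbF.
by move=> /orP [] /eqP; lia.
Qed.

Lemma count_Ztilde_route c : line_empty w c -> count_mem c (Ztilde_route w) = 1.
Proof.
rewrite /line_empty /line_len /line_blocked /line_start => empty_c.
rewrite /= !count_cat /= count_cat /= !count_uniq_mem ?iota_uniq // !mem_iota.
lia.
Qed.

Lemma last_Ztilde_route : last (line_start w) (Ztilde_route w) = 3 * w + 1.
Proof. by rewrite /= last_cat /= last_cat. Qed.

End Ztilde.

Theorem mainTheorem6 (k : nat) (hk : 2 <= k) :
  let w := 2 ^ k - 1 in
  (exists ls : seq nat,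
      valid_exec (line_len w) (line_blocked w) (line_start w) (Ztilde w) ls) /\
  (forall ls : seq nat,
      valid_exec (line_len w) (line_blocked w) (line_start w) (Ztilde w) ls ->
      (forall c, line_empty w c -> count_mem c ls = 1) /\
      last (line_start w) ls = 3 * w + 1).
Proof.
move=> w.
have w_ge2 : 2 <= w by have := leq_pexp2l (isT : 0 < 2) hk; rewrite /w; lia.
split; first by exists (Ztilde_route w); exact: valid_Ztilde_route w_ge2.
move=> ls /(valid_Ztilde_routeE w_ge2) ->.
by split; [apply: count_Ztilde_route | apply: last_Ztilde_route].
Qed.
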